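(* Let $\kappa, m, n$ be positive integers with $m$ and $n$ coprime, and suppose there is an integer $s$ with \[ \kappa^4 m^4 n^4 - 32\kappa(m^2+n^2) = s^2. \] Then $(\kappa, m, n) = (4, 1, 1)$. *)

From Stdlib Require Import ZArith.

From Stdlib Require Import ZArith Lia List Bool.
Open Scope Z_scope.

(* Put X = κ²m²n².  Then X² - s² = 32κ(m² + n²) > 0, so d = X - |s| satisfies
   0 < d <= X and d(2X - d) = 32κ(m² + n²).  For m <= n the right-hand side is
   at most 64κn², whereas the left-hand side is at least dX = (dκm²)(κn²); hence
   dκm² <= 64.  Rearranged, the equation reads n²(2dκ²m² - 32κ) = 32κm² + d², so
   n² <= 32·64 + 64² < 79², and the finitely many remaining cases are decided by
   computation. *)

Lemma diff_sq_factor (X s N : Z) :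
  0 <= X -> 0 < N -> X ^ 2 - s ^ 2 = N ->
  exists d, 0 < d <= X /\ d * (2 * X - d) = N.
Proof.
  intros HX HN H.
  assert (Hs : s ^ 2 = Z.abs s * Z.abs s) by (rewrite Z.abs_square; ring).
  exists (X - Z.abs s); split.
  - assert (Z.abs s < X) by nia. lia.
  - rewrite <- H, Hs. ring.
Qed.

Definition range1 (len : nat) : list Z := map Z.of_nat (seq 1 len).

Lemma forallb_range1 (f : Z -> bool) (len : nat) (x : Z) :
  forallb f (range1 len) = true -> 1 <= x <= Z.of_nat len -> f x = true.
Proof.
  intros Hall Hx. rewrite forallb_forall in Hall. apply Hall.
  apply in_map_iff. exists (Z.to_nat x). split; [lia | apply in_seq; lia].
Qed.

Definition reduced_solutions_trivial : bool :=
  forallb (fun d => forallb (fun K => forallb (fun m =>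
    implb (d * K * m ^ 2 <=? 64) (forallb (fun n =>
      implb ((m <=? n) && (Z.gcd m n =? 1) &&
             (n ^ 2 * (2 * d * K ^ 2 * m ^ 2 - 32 * K) =? 32 * K * m ^ 2 + d ^ 2))
            ((K =? 4) && (m =? 1) && (n =? 1))) (range1 78)))
    (range1 8)) (range1 64)) (range1 64).

Lemma reduced_solutions_trivialP : reduced_solutions_trivial = true.
Proof. vm_compute. reflexivity. Qed.

Lemma reduced_solutions_small (d K m n : Z) :
  1 <= d <= 64 -> 1 <= K <= 64 -> 1 <= m <= 8 -> 1 <= n <= 78 ->
  d * K * m ^ 2 <= 64 -> m <= n -> Z.gcd m n = 1 ->
  n ^ 2 * (2 * d * K ^ 2 * m ^ 2 - 32 * K) = 32 * K * m ^ 2 + d ^ 2 ->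
  K = 4 /\ m = 1 /\ n = 1.
Proof.
  intros Hd HK Hm Hn Hb Hmn Hg He.
  pose proof reduced_solutions_trivialP as C; unfold reduced_solutions_trivial in C.
  apply (forallb_range1 _ 64 d) in C; [cbv beta in C | lia].
  apply (forallb_range1 _ 64 K) in C; [cbv beta in C | lia].
  apply (forallb_range1 _ 8 m) in C; [cbv beta in C | lia].
  rewrite implb_true_iff in C; specialize (C (proj2 (Z.leb_le _ _) Hb)).
  apply (forallb_range1 _ 78 n) in C; [cbv beta in C | lia].
  rewrite implb_true_iff, !andb_true_iff, Z.leb_le, !Z.eqb_eq in C.
  tauto.
Qed.

Section ReducedEquation.

Variables K m n d : Z.
Hypotheses (K_gt0 : 0 < K) (m_gt0 : 0 < m) (m_le_n : m <= n) (d_gt0 : 0 < d).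
Hypothesis d_le : d <= K ^ 2 * m ^ 2 * n ^ 2.
Hypothesis coprime_mn : Z.gcd m n = 1.
Hypothesis d_eq : d * (2 * (K ^ 2 * m ^ 2 * n ^ 2) - d) = 32 * K * (m ^ 2 + n ^ 2).

Lemma reduced_eq : n ^ 2 * (2 * d * K ^ 2 * m ^ 2 - 32 * K) = 32 * K * m ^ 2 + d ^ 2.
Proof.
  apply Z.sub_move_0_r.
  transitivity (d * (2 * (K ^ 2 * m ^ 2 * n ^ 2) - d) - 32 * K * (m ^ 2 + n ^ 2));
    [ring | apply Z.sub_move_0_r, d_eq].
Qed.

Lemma reduced_param_bound : d * K * m ^ 2 <= 64.
Proof.
  assert (Hlow : d * (K ^ 2 * m ^ 2 * n ^ 2) <= d * (2 * (K ^ 2 * m ^ 2 * n ^ 2) - d))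
    by (apply Z.mul_le_mono_nonneg_l; lia).
  assert (Hsq : m ^ 2 <= n ^ 2) by (apply Z.pow_le_mono_l; lia).
  assert (Hup : 32 * K * (m ^ 2 + n ^ 2) <= 64 * (K * n ^ 2)) by nia.
  assert (Hdn : (d * K * m ^ 2) * (K * n ^ 2) <= 64 * (K * n ^ 2)).
  { replace ((d * K * m ^ 2) * (K * n ^ 2)) with (d * (K ^ 2 * m ^ 2 * n ^ 2)) by ring.
    lia. }
  apply Z.mul_le_mono_pos_r in Hdn; [exact Hdn |].
  apply Z.mul_pos_pos; [exact K_gt0 | apply Z.pow_pos_nonneg; lia].
Qed.

Lemma reduced_param_ranges : d <= 64 /\ K <= 64 /\ m <= 8.
Proof.
  pose proof reduced_param_bound as Hb.
  assert (Hm2 : 1 <= m ^ 2) by (change 1 with (1 ^ 2); apply Z.pow_le_mono_l; lia).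
  assert (HKm : K <= K * m ^ 2 <= 64) by nia.
  split; [nia | split; [lia |]].
  destruct (Z_le_gt_dec m 8) as [| Hbig]; [lia |].
  assert (9 ^ 2 <= m ^ 2) by (apply Z.pow_le_mono_l; lia).
  nia.
Qed.

Lemma reduced_n_bound : n <= 78.
Proof.
  pose proof reduced_param_bound as Hb.
  pose proof reduced_param_ranges as [Hd _].
  pose proof reduced_eq as Hred.
  assert (HKm : K * m ^ 2 <= 64) by nia.
  assert (Hn2 : 0 < n ^ 2) by (apply Z.pow_pos_nonneg; lia).
  revert Hred; generalize (2 * d * K ^ 2 * m ^ 2 - 32 * K) as F; intros F Hred.
  assert (HF : 1 <= F).
  { destruct (Z_lt_le_dec 0 F) as [| HF]; [lia |].
    pose proof (Z.mul_nonneg_nonpos (n ^ 2) F ltac:(lia) HF). nia. }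
  assert (Hsq : n ^ 2 <= 6144) by nia.
  destruct (Z_le_gt_dec n 78) as [| Hbig]; [lia |].
  assert (79 ^ 2 <= n ^ 2) by (apply Z.pow_le_mono_l; lia).
  lia.
Qed.

Lemma reduced_solutions : K = 4 /\ m = 1 /\ n = 1.
Proof.
  destruct reduced_param_ranges as [Hd64 [HK64 Hm8]].
  pose proof reduced_n_bound.
  pose proof reduced_param_bound.
  pose proof reduced_eq.
  apply (reduced_solutions_small d K m n); lia.
Qed.

End ReducedEquation.

Theorem theorem5 (kappa m n s : Z) :
  0 < kappa -> 0 < m -> 0 < n -> Z.gcd m n = 1 ->
  kappa ^ 4 * m ^ 4 * n ^ 4 - 32 * kappa * (m ^ 2 + n ^ 2) = s ^ 2 ->
  kappa = 4 /\ m = 1 /\ n = 1.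
Proof.
  intros HK Hm Hn Hg H.
  destruct (diff_sq_factor (kappa ^ 2 * m ^ 2 * n ^ 2) s (32 * kappa * (m ^ 2 + n ^ 2)))
    as [d [Hd He]]; [nia | nia | lia |].
  destruct (Z.le_ge_cases m n) as [Hmn | Hnm].
  - exact (reduced_solutions kappa m n d HK Hm Hmn (proj1 Hd) (proj2 Hd) Hg He).
  - rewrite Z.gcd_comm in Hg.
    replace (kappa ^ 2 * m ^ 2 * n ^ 2) with (kappa ^ 2 * n ^ 2 * m ^ 2) in Hd, He by ring.
    rewrite Z.add_comm in He.
    destruct (reduced_solutions kappa n m d HK Hn Hnm (proj1 Hd) (proj2 Hd) Hg He) as [? [? ?]].
    auto.
Qed.
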